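(* Let $k$ be the squared exponential kernel on $\mathcal{D}\subset\mathbb{R}^d$. Let $X\subset\mathcal{D}$ be a finite set and $X^{\mathrm s}\subset X$. For any finite $X^{\mathrm a}\subset\mathcal{D}$, let $K$ and $\tilde K$ be the kernel matrices on $X$ and on $X\cup X^{\mathrm a}$ respectively, let $U$ be the Nyström approximation of $K$ based on $X^{\mathrm s}$, and $\tilde U$ the Nyström approximation of $\tilde K$ based on $X^{\mathrm s}\cup X^{\mathrm a}$. Then $$\mathrm{tr}(\tilde K-\tilde U)\le\mathrm{tr}(K-U).$$
   Context: For a dataset $X=\{x_1,\dots,x_N\}$ with kernel matrix $K_{XX}=[k(x_i,x_j)]_{i,j}$ and $S=\{x_{s_1},\dots,x_{s_M}\}\subset X$, the Nyström approximation of $K_{XX}$ based on $S$ is $U_{XX}=K_{XS}K_{SS}^\dagger K_{SX}$, where $K_{XS}=[k(x_i,x_{s_j})]_{i,j}$, $K_{SS}=[k(x_{s_i},x_{s_j})]_{i,j}$ and $\dagger$ denotes the pseudoinverse. *)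

From HB Require Import structures.
From Stdlib Require Import ClassicalEpsilon.
From mathcomp Require Import all_boot all_order all_algebra.
From mathcomp Require Import finmap.
From mathcomp Require Import mathcomp_extra boolp reals.
From mathcomp Require Import sequences exp.
Set Implicit Arguments. Unset Strict Implicit. Unset Printing Implicit Defensive.
Import Order.TTheory GRing.Theory Num.Theory.
Local Open Scope ring_scope.

Definition sqdist (R : realType) (d : nat) (x y : 'rV[R]_d) : R :=
  \sum_(i < d) (x 0 i - y 0 i) ^+ 2.

Definition se_kernel (R : realType) (d : nat) (sf2 l : R) (x y : 'rV[R]_d) : R :=
  sf2 * expR (- (sqdist x y / (2 * l ^+ 2))).

(* Moore-Penrose conditions and the Moore-Penrose pseudoinverse
   (chosen by classical description; it exists and is unique over the reals). *)
Definition penrose (R : realType) (m n : nat) (A : 'M[R]_(m, n)) (P : 'M[R]_(n, m)) :=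
  [/\ A *m P *m A = A, P *m A *m P = P, (A *m P)^T = A *m P & (P *m A)^T = P *m A].

Definition pinv (R : realType) (m n : nat) (A : 'M[R]_(m, n)) : 'M[R]_(n, m) :=
  epsilon (inhabits 0) (penrose A).

Definition kmat (R : realType) (d : nat) (k : 'rV[R]_d -> 'rV[R]_d -> R)
  (A B : seq 'rV[R]_d) : 'M[R]_(size A, size B) :=
  \matrix_(i < size A, j < size B) k (nth 0 A i) (nth 0 B j).

Definition nystrom (R : realType) (d : nat) (k : 'rV[R]_d -> 'rV[R]_d -> R)
  (X S : seq 'rV[R]_d) : 'M[R]_(size X) :=
  kmat k X S *m pinv (kmat k S S) *m kmat k S X.

From HB Require Import structures.
From mathcomp Require Import all_boot all_order all_algebra.
From mathcomp Require Import finmap.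
From mathcomp Require Import mathcomp_extra boolp reals.
From mathcomp Require Import topology normedtype sequences exp.
From mathcomp Require Import ring lra.
From Stdlib Require Import ClassicalEpsilon.
Set Implicit Arguments.
Unset Strict Implicit.
Unset Printing Implicit Defensive.

Import Order.TTheory GRing.Theory Num.Theory numFieldNormedType.Exports.
Local Open Scope ring_scope.

(* For a symmetric positive semidefinite kernel, the diagonal entry of K - U
   at a point x is k(x,x) - k_S(x) K_SS^+ k_S(x)^T.  This is the minimum over
   weights w of k(x,x) - 2 k_S(x) w^T + w K_SS w^T, the squared feature-space
   distance from k(x,.) to sum_j w_j k(s_j,.): the minimum is attained at any
   z with k_S(x) = z K_SS, and such a z exists because k_S(x) is orthogonal to
   the kernel of K_SS.  Enlarging S can only lower the minimum, and it is 0
   when x is in S.  Splitting the trace over X u Xa into the points of X, whose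
   landmark set grows from Xs to Xs u Xa, and the remaining points, which are
   landmarks, gives the inequality.  The squared exponential kernel is
   positive semidefinite because it is a rescaling of exp <x/l, y/l>, whose
   exponential series is a sum of Schur powers of a Gram matrix. *)

Lemma addmx_entry (R : nmodType) m n (A B : 'M[R]_(m, n)) i j :
  (A + B) i j = A i j + B i j.
Proof. by rewrite mxE. Qed.

Lemma oppmx_entry (R : zmodType) m n (A : 'M[R]_(m, n)) i j : (- A) i j = - A i j.
Proof. by rewrite mxE. Qed.

Lemma mulmx_trmx_eq0 (R : realDomainType) n (w : 'rV[R]_n) : w *m w^T = 0 -> w = 0.
Proof.
move=> /matrixP /(_ 0 0); rewrite !mxE => /eqP.
rewrite psumr_eq0 => [/allP w0|j _]; last by rewrite mxE -expr2 sqr_ge0.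
apply/matrixP => i j; rewrite ord1 !mxE.
by have := w0 j (mem_index_enum _); rewrite mxE -expr2 sqrf_eq0 => /eqP.
Qed.

Lemma penrose_full_rank_factor (R : realType) m r n
    (F : 'M[R]_(m, r)) (G : 'M[R]_(r, n)) :
  row_full F -> row_free G -> exists P, penrose (F *m G) P.
Proof.
move=> /row_fullP [B BF] /row_freeP [C GC].
have uF : F^T *m F \in unitmx.
  rewrite -row_free_unit; apply: inj_row_free => v vF0.
  have /mulmx_trmx_eq0 vF : (v *m F^T) *m (v *m F^T)^T = 0.
    by rewrite trmx_mul trmxK mulmxA -(mulmxA v) vF0 mul0mx.
  by rewrite -[v]mulmx1 -trmx1 -BF trmx_mul mulmxA vF mul0mx.
have uG : G *m G^T \in unitmx.
  rewrite -row_free_unit; apply: inj_row_free => v vG0.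
  have /mulmx_trmx_eq0 vG : (v *m G) *m (v *m G)^T = 0.
    by rewrite trmx_mul mulmxA -(mulmxA v) vG0 mul0mx.
  by rewrite -[v]mulmx1 -GC mulmxA vG mul0mx.
set a := invmx (G *m G^T); set b := invmx (F^T *m F).
have aT : a^T = a by rewrite /a trmx_inv trmx_mul trmxK.
have bT : b^T = b by rewrite /b trmx_inv trmx_mul trmxK.
exists (G^T *m (a *m (b *m F^T))).
have AP : F *m G *m (G^T *m (a *m (b *m F^T))) = F *m (b *m F^T).
  by rewrite -mulmxA (mulmxA G) (mulmxA (G *m G^T)) mulmxV // mul1mx.
have PA : G^T *m (a *m (b *m F^T)) *m (F *m G) = G^T *m (a *m G).
  by rewrite -!mulmxA (mulmxA F^T) (mulmxA b) mulVmx // mul1mx.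
split.
- by rewrite AP -!mulmxA (mulmxA F^T) (mulmxA b) mulVmx // mul1mx.
- by rewrite PA -!mulmxA (mulmxA G) (mulmxA (G *m G^T)) mulmxV // mul1mx.
- by rewrite AP !trmx_mul trmxK bT mulmxA.
- by rewrite PA !trmx_mul trmxK aT mulmxA.
Qed.

Lemma pinvP (R : realType) m n (A : 'M[R]_(m, n)) : penrose A (pinv A).
Proof.
rewrite /pinv; apply: epsilon_spec; rewrite -(mulmx_base A).
by apply: penrose_full_rank_factor; [apply: col_base_full | apply: row_base_free].
Qed.

Lemma kmat_cons (R : realType) d (k : 'rV[R]_d -> 'rV[R]_d -> R) x A y B :
  kmat k (x :: A) (y :: B) =
  block_mx (kmat k [:: x] [:: y]) (kmat k [:: x] B) (kmat k A [:: y]) (kmat k A B).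
Proof.
apply/matrixP => i j; rewrite !mxE.
case: (splitP (i : 'I_(1 + size A))) => i' ->; rewrite !mxE;
  case: (splitP (j : 'I_(1 + size B))) => j' ->; rewrite !mxE ?ord1 //=.
Qed.

Lemma quad_formE (R : comNzRingType) n (w v : 'rV[R]_n) (M : 'M[R]_n) :
  (w *m M *m v^T) 0 0 = \sum_i \sum_j w 0 i * v 0 j * M i j.
Proof.
rewrite !mxE; under eq_bigr do rewrite !mxE big_distrl /=.
rewrite exchange_big /=; apply: eq_bigr => i _; apply: eq_bigr => j _.
by rewrite mulrAC.
Qed.

Lemma sym_submx_of_ker_orth (F : fieldType) n (M : 'M[F]_n) (b : 'rV_n) :
  M^T = M -> (forall v : 'rV_n, v *m M = 0 -> v *m b^T = 0) -> (b <= M)%MS.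
Proof.
move=> MT bM; set N := kermx M.
have bN : b *m N^T = 0.
  apply: trmx_inj; rewrite trmx_mul trmxK trmx0; apply/row_matrixP => j.
  by rewrite row_mul row0 bM // -row_mul mulmx_ker row0.
have MN : M *m N^T = 0 by rewrite -{1}MT -trmx_mul mulmx_ker trmx0.
have sMK : (M <= kermx N^T)%MS by apply/sub_kermxP.
have rkK : \rank (kermx N^T) = \rank M.
  by rewrite mxrank_ker mxrank_tr mxrank_ker subKn // rank_leq_row.
have sKM : (kermx N^T <= M)%MS by rewrite -(mxrank_leqif_sup sMK).2 rkK.
by apply: submx_trans sKM; apply/sub_kermxP.
Qed.

Lemma sum_nth_eq_indicator (T : eqType) (R : nzSemiRingType) (x0 y : T) (S : seq T)
    (F : T -> R) :
  uniq S -> y \in S -> \sum_(j < size S) (y == nth x0 S j)%:R * F (nth x0 S j) = F y.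
Proof.
move=> S_uniq yS.
transitivity (\sum_(z <- S) (y == z)%:R * F z); first by rewrite (big_nth x0) big_mkord.
rewrite (bigD1_seq y) //= eqxx mul1r big1 ?addr0 // => z zy.
by rewrite eq_sym (negbTE zy) mul0r.
Qed.

Definition psd_kernel (T : Type) (R : numDomainType) (k : T -> T -> R) :=
  forall n (p : 'I_n -> T) (u : 'I_n -> R),
  0 <= \sum_i \sum_j u i * u j * k (p i) (p j).

Section SquaredExponentialPSD.
Variable R : realType.
Local Open Scope classical_set_scope.
Local Open Scope ring_scope.

Lemma sum_gram_ge0 (I F : finType) (v : I -> R) (A : I -> F -> R) :
  0 <= \sum_i \sum_j v i * v j * \sum_f A i f * A j f.
Proof.
have -> : \sum_i \sum_j v i * v j * \sum_f A i f * A j f =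
          \sum_f (\sum_i v i * A i f) ^+ 2.
  under [RHS]eq_bigr do rewrite expr2 mulr_suml; rewrite [RHS]exchange_big /=.
  apply: eq_bigr => i _; under [RHS]eq_bigr do rewrite mulr_sumr.
  rewrite [RHS]exchange_big /=; apply: eq_bigr => j _.
  by rewrite mulr_sumr; apply: eq_bigr => f _; ring.
by apply: sumr_ge0 => f _; apply: sqr_ge0.
Qed.

Lemma sum_dot_expr_ge0 (I : finType) n m (v : I -> R) (y : I -> 'I_n -> R) :
  0 <= \sum_i \sum_j v i * v j * (\sum_l y i l * y j l) ^+ m.
Proof.
have expand i j : (\sum_l y i l * y j l) ^+ m =
    \sum_(f : {ffun 'I_m -> 'I_n}) (\prod_t y i (f t)) * (\prod_t y j (f t)).
  rewrite -[m in LHS]card_ord -prodr_const bigA_distr_bigA /=.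
  by apply: eq_bigr => f _; rewrite -big_split.
under eq_bigr do under eq_bigr do rewrite expand.
exact: sum_gram_ge0.
Qed.

Lemma sum_expR_dot_ge0 (I : finType) n (v : I -> R) (y : I -> 'I_n -> R) :
  0 <= \sum_i \sum_j v i * v j * expR (\sum_l y i l * y j l).
Proof.
set a := fun i j => \sum_l y i l * y j l.
pose s N := \sum_i \sum_j v i * v j * series (exp_coeff (a i j)) N.
have s_cvg : s @ \oo --> \sum_i \sum_j v i * v j * expR (a i j).
  apply: cvg_big => //; first exact: add_continuous.
  move=> i _; apply: cvg_big => //; first exact: add_continuous.
  by move=> j _; apply: cvgM; [exact: cvg_cst | exact: is_cvg_series_exp_coeff].
rewrite -(cvg_lim _ s_cvg) //; apply: limr_ge; first exact: cvgP s_cvg.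
near=> N; rewrite /s.
have -> : \sum_i \sum_j v i * v j * series (exp_coeff (a i j)) N =
   \sum_(0 <= m < N) (m`!%:R)^-1 * \sum_i \sum_j v i * v j * (a i j) ^+ m.
  under eq_bigr do under eq_bigr do rewrite /series /= big_distrr /=.
  under eq_bigr do rewrite exchange_big /=.
  rewrite exchange_big /=; apply: eq_bigr => m _.
  rewrite mulr_sumr; apply: eq_bigr => i _; rewrite mulr_sumr; apply: eq_bigr => j _.
  by rewrite /exp_coeff /=; ring.
apply: sumr_ge0 => m _; apply: mulr_ge0; first by rewrite invr_ge0.
exact: sum_dot_expr_ge0.
Unshelve. all: by end_near.
Qed.

Lemma se_kernelC d (sf2 l : R) (x y : 'rV[R]_d) :
  se_kernel sf2 l x y = se_kernel sf2 l y x.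
Proof.
by rewrite /se_kernel /sqdist; under eq_bigr do rewrite -sqrrN opprB.
Qed.

Lemma se_kernelE d (sf2 l : R) (x y : 'rV[R]_d) : l != 0 ->
  let g (z : 'rV[R]_d) := expR (- (\sum_i z 0 i ^+ 2) / (2 * l ^+ 2)) in
  se_kernel sf2 l x y = sf2 * (g x * g y * expR (\sum_i (x 0 i / l) * (y 0 i / l))).
Proof.
move=> l0 g; rewrite /se_kernel /g -!expRD; congr (_ * expR _).
have -> : sqdist x y =
    \sum_i x 0 i ^+ 2 + \sum_i y 0 i ^+ 2 - 2 * \sum_i x 0 i * y 0 i.
  rewrite /sqdist mulr_sumr -big_split -sumrB; apply: eq_bigr => i _ /=.
  by set a := x 0 i; set b := y 0 i; ring.
have -> : \sum_i (x 0 i / l) * (y 0 i / l) = (\sum_i x 0 i * y 0 i) / l ^+ 2.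
  by rewrite mulr_suml; apply: eq_bigr => i _; field.
by field.
Qed.

Lemma se_kernel_psd d (sf2 l : R) : 0 <= sf2 -> l != 0 ->
  psd_kernel (@se_kernel R d sf2 l).
Proof.
move=> sf2_ge0 l0 n p u.
pose g (z : 'rV[R]_d) := expR (- (\sum_i z 0 i ^+ 2) / (2 * l ^+ 2)).
have -> : \sum_i \sum_j u i * u j * se_kernel sf2 l (p i) (p j) =
    sf2 * \sum_i \sum_j (u i * g (p i)) * (u j * g (p j)) *
          expR (\sum_k (p i 0 k / l) * (p j 0 k / l)).
  rewrite mulr_sumr; apply: eq_bigr => i _; rewrite mulr_sumr; apply: eq_bigr => j _.
  by rewrite se_kernelE //; rewrite /g; ring.
by apply: mulr_ge0 => //; apply: sum_expR_dot_ge0.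
Qed.

End SquaredExponentialPSD.

Section NystromResidual.
Variables (R : realType) (d : nat) (k : 'rV[R]_d -> 'rV[R]_d -> R).
Hypothesis kC : forall x y, k x y = k y x.
Hypothesis k_psd : psd_kernel k.

Lemma tr_kmat A B : (kmat k A B)^T = kmat k B A.
Proof. by apply/matrixP => i j; rewrite !mxE kC. Qed.

Lemma quad_kmat_ge0 A (w : 'rV_(size A)) : 0 <= (w *m kmat k A A *m w^T) 0 0.
Proof.
rewrite quad_formE; have := @k_psd _ (fun i => nth 0 A i) (fun i => w 0 i).
by congr (_ <= _); apply: eq_bigr => i _; apply: eq_bigr => j _; rewrite mxE.
Qed.

Definition approx_err S x (w : 'rV_(size S)) :=
  k x x - 2 * (kmat k [:: x] S *m w^T) 0 0 + (w *m kmat k S S *m w^T) 0 0.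

Arguments approx_err : clear implicits.

Definition resid S x := (kmat k [:: x] [:: x] - nystrom k [:: x] S) 0 0.

Lemma kmat_bilinC A B (u : 'rV_(size A)) (v : 'rV_(size B)) :
  (u *m kmat k A B *m v^T) 0 0 = (v *m kmat k B A *m u^T) 0 0.
Proof.
transitivity ((u *m kmat k A B *m v^T)^T 0 0); first by rewrite [RHS]mxE.
by rewrite !trmx_mul trmxK tr_kmat mulmxA.
Qed.

Lemma kmat_dotC A y (u : 'rV_(size A)) :
  (u *m kmat k A [:: y]) 0 0 = (kmat k [:: y] A *m u^T) 0 0.
Proof.
transitivity ((kmat k [:: y] A *m u^T)^T 0 0); last by rewrite [LHS]mxE.
by rewrite trmx_mul trmxK tr_kmat.
Qed.

Lemma approx_err_ge0 S x w : 0 <= approx_err S x w.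
Proof.
pose v : 'rV_(1 + size S) := row_mx 1 (- w).
have : 0 <= (v *m block_mx (kmat k [:: x] [:: x]) (kmat k [:: x] S)
                       (kmat k S [:: x]) (kmat k S S) *m v^T) 0 0.
  by rewrite -kmat_cons; exact: (@quad_kmat_ge0 (x :: S) v).
rewrite mul_row_block tr_row_mx mul_row_col !mul1mx linearN /=.
rewrite trmx1 !mulmx1 mulmxDl !mulNmx !mulmxN opprK.
rewrite !(addmx_entry, oppmx_entry).
rewrite kmat_dotC [kmat k [:: x] [:: x] _ _]mxE /approx_err.
lra.
Qed.

Lemma kmat_orth_ker S x (v : 'rV_(size S)) :
  v *m kmat k S S = 0 -> v *m (kmat k [:: x] S)^T = 0.
Proof.
move=> vK; set beta := (kmat k [:: x] S *m v^T) 0 0.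
suff beta0 : beta = 0.
  by rewrite [LHS]mx11_scalar tr_kmat kmat_dotC -/beta beta0 raddf0.
apply/eqP/negP => /negP beta_neq0.
(* Along the line s v, approx_err is affine in s with slope -2 beta. *)
pose s := (k x x + 1) / (2 * beta).
have := approx_err_ge0 x (s *: v).
rewrite /approx_err -scalemxAl vK scaler0 !mul0mx [(s *: v)^T]linearZ /= -scalemxAr.
rewrite [((s *: _ : 'M_1) _ _)]mxE [X in _ + X]mxE -/beta addr0.
have -> : k x x - 2 * (s * beta) = -1 by rewrite /s; field.
by rewrite lerNr oppr0 ler10.
Qed.

Lemma kmat_row_range S x : exists z, kmat k [:: x] S = z *m kmat k S S.
Proof.
have /submxP[z ->] := sym_submx_of_ker_orth (tr_kmat S S) (@kmat_orth_ker S x).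
by exists z.
Qed.

Lemma resid_approx_err S x z :
  kmat k [:: x] S = z *m kmat k S S -> resid S x = approx_err S x z.
Proof.
move=> bz; have [KPK _ _ _] := pinvP (kmat k S S).
rewrite /resid /nystrom -[kmat k S [:: x]]tr_kmat bz trmx_mul tr_kmat.
rewrite mulmxA -2!(mulmxA z) KPK /approx_err bz.
rewrite addmx_entry oppmx_entry [kmat k [:: x] [:: x] _ _]mxE.
by set q := (_ *m _ *m _) 0 0; ring.
Qed.

Lemma resid_le_approx_err S x w : resid S x <= approx_err S x w.
Proof.
have [z bz] := kmat_row_range S x.
rewrite (resid_approx_err bz) /approx_err bz -subr_ge0.
have := quad_kmat_ge0 (w - z); rewrite linearB /= mulmxBl mulmxBr !mulmxBl.
rewrite !(addmx_entry, oppmx_entry) (kmat_bilinC w z); lra.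
Qed.

Definition selmx (S S' : seq 'rV[R]_d) : 'M[R]_(size S, size S') :=
  \matrix_(i, j) (nth 0 S i == nth 0 S' j)%:R.

Lemma selmx_kmat S S' B :
  uniq S' -> {subset S <= S'} -> selmx S S' *m kmat k S' B = kmat k S B.
Proof.
move=> S'_uniq sSS'; apply/matrixP => i j; rewrite !mxE.
under eq_bigr do rewrite !mxE.
by rewrite (sum_nth_eq_indicator _ (fun y => k y (nth 0 B j))) // sSS' // mem_nth.
Qed.

Lemma kmat_trselmx A S S' :
  uniq S' -> {subset S <= S'} -> kmat k A S' *m (selmx S S')^T = kmat k A S.
Proof. by move=> S'_uniq sSS'; rewrite -tr_kmat -trmx_mul selmx_kmat // tr_kmat. Qed.

Lemma approx_err_subset S S' x z : uniq S' -> {subset S <= S'} ->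
  approx_err S x z = approx_err S' x (z *m selmx S S').
Proof.
move=> S'_uniq sSS'; rewrite /approx_err trmx_mul !mulmxA kmat_trselmx //.
rewrite -[z *m selmx S S' *m _](mulmxA z) selmx_kmat //.
by rewrite -(mulmxA z (kmat k S S')) kmat_trselmx.
Qed.

Lemma resid_subset_le S S' x : uniq S' -> {subset S <= S'} ->
  resid S' x <= resid S x.
Proof.
move=> S'_uniq sSS'; have [z bz] := kmat_row_range S x.
by rewrite (resid_approx_err bz) (approx_err_subset _ _ S'_uniq sSS') resid_le_approx_err.
Qed.

Lemma resid_mem_le0 S x : uniq S -> x \in S -> resid S x <= 0.
Proof.
move=> S_uniq xS; apply: le_trans (resid_subset_le (S := [:: x]) x S_uniq _) _.
  by move=> y; rewrite mem_seq1 => /eqP ->.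
apply: le_trans (resid_le_approx_err (S := [:: x]) x 1%:M) _.
by rewrite /approx_err trmx1 !mulmx1 mul1mx mxE; lra.
Qed.

Lemma nystrom_diag L S i :
  (kmat k L L - nystrom k L S) i i = resid S (nth 0 L i).
Proof.
rewrite /resid /nystrom !mxE; congr (_ - _); apply: eq_bigr => j _.
by rewrite !mxE; congr (_ * _); apply: eq_bigr => l _; rewrite !mxE.
Qed.

Lemma trace_kmat_sub_nystrom L S :
  \tr (kmat k L L - nystrom k L S) = \sum_(y <- L) resid S y.
Proof.
rewrite [RHS](big_nth 0) big_mkord; apply: eq_bigr => i _; exact: nystrom_diag.
Qed.

End NystromResidual.

Local Open Scope fset_scope.

Theorem lemma3p7 (R : realType) (d : nat) (sf2 l : R) (D : pred 'rV[R]_d)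
  (X Xs Xa : {fset 'rV[R]_d}) :
  0 < sf2 -> 0 < l ->
  {subset X <= D} -> Xs `<=` X -> {subset Xa <= D} ->
  let k := se_kernel sf2 l in
  let Xt := X `|` Xa in
  let Xst := Xs `|` Xa in
  \tr (kmat k Xt Xt - nystrom k Xt Xst) <= \tr (kmat k X X - nystrom k X Xs).
Proof.
move=> sf2_gt0 l_gt0 _ _ _; cbv zeta; set k := se_kernel sf2 l.
have kC : forall x y, k x y = k y x by move=> x y; apply: se_kernelC.
have k_psd : psd_kernel k by apply: se_kernel_psd; [apply: ltW | apply: lt0r_neq0].
rewrite !(trace_kmat_sub_nystrom k) [leLHS](big_fsetID _ (mem X)) /=.
have -> : [fset y in X `|` Xa | y \in X] = X.
  by apply/fsetP => y; rewrite !inE /= andbC; case: (boolP (y \in X)).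
rewrite -[leRHS]addr0; apply: lerD.
  apply: ler_sum => y _; apply: (resid_subset_le kC k_psd); first exact: fset_uniq.
  by move=> z; rewrite !inE => ->.
rewrite big_seq_cond; apply: sumr_le0 => y /andP[+ _].
rewrite !inE /= => /andP[yXXa yNX]; apply: (resid_mem_le0 kC k_psd); first exact: fset_uniq.
by move: yXXa; rewrite !inE (negbTE yNX) /= => ->; rewrite orbT.
Qed.
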